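(* For $\lambda\in(0,1)$ and $t\in(0,1)\cup(1,\infty)$ define $\kappa_\lambda(t)=\frac{m_\lambda(t)}{\mathrm{hel}(t)}$. Then for every such $t$ and $\lambda$: (i) $\kappa_\lambda(t)=\kappa_{1-\lambda}(1/t)$; (ii) $L(\lambda)\le\kappa_\lambda(t)\le U(\lambda)$.
   Context: $m_\lambda(t)=\lambda t\ln t-(\lambda t+1-\lambda)\ln(\lambda t+1-\lambda)$ and $\mathrm{hel}(t)=\frac12(\sqrt t-1)^2$ for $t>0$. With $\eta(\lambda)=-\lambda\ln\lambda$, define $L(\lambda)=2\min\{\eta(\lambda),\eta(1-\lambda)\}$ and $U(\lambda)=\frac{2\lambda(1-\lambda)}{1-2\lambda}\ln\frac{1-\lambda}{\lambda}$ for $\lambda\neq 1/2$, with $U(1/2)=1$ (its continuous extension). *)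

From Stdlib Require Import Reals Lra.
Open Scope R_scope.

Definition m_fun (lam t : R) : R :=
  lam * t * ln t - (lam * t + 1 - lam) * ln (lam * t + 1 - lam).

Definition hel (t : R) : R := / 2 * (sqrt t - 1) ^ 2.

Definition eta (lam : R) : R := - lam * ln lam.

Definition Lb (lam : R) : R := 2 * Rmin (eta lam) (eta (1 - lam)).

Definition Ub (lam : R) : R :=
  if Req_EM_T lam (/ 2) then 1
  else 2 * lam * (1 - lam) / (1 - 2 * lam) * ln ((1 - lam) / lam).

Definition kappa (lam t : R) : R := m_fun lam t / hel t.

From Stdlib Require Import Reals Lra Classical.
From Coquelicot Require Import Coquelicot.
Open Scope R_scope.

(* The symmetry is a direct computation, and it reduces the bounds to [t > 1]. With
   [t = x ^ 2], [x > 1], one has [hel t = (x - 1) ^ 2 / 2], so [kappa] becomes [kappa2].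
   - Lower bound: [dm2 x - c (x - 1) = x * low_gap (1 / x)], and [low_gap] is quasi-concave
     on [[0, 1]] (its derivative has the sign of the convex quadratic [low_gap_num], which is
     nonpositive at [1]) with [low_gap 0 = 2 eta l - c >= 0] and [low_gap 1 = 0]. Hence
     [2 m2 - c (x - 1) ^ 2] is nondecreasing from its value [0] at [x = 1].
   - Upper bound for [l >= 1/2]: [d3m2 <= 0] on [x >= 1], so [d2m2 <= d2m2 1 = 4 l (1 - l)],
     and [4 l (1 - l) <= Ub l] is [ln r <= 2 (r - 1) / (r + 1)] for [r = (1 - l) / l <= 1].
   - Upper bound for [l < 1/2]: the derivative of [kappa2] has the sign of [kappa2_num],
     which vanishes at [1] and at [odds l], while its derivative is nonnegative up to
     [sqrt (odds l)] and decreasing afterwards. So [kappa2] is maximal at [odds l], where it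
     equals [Ub l]. *)

Lemma MVT_is_derive (f df : R -> R) a b : a < b ->
  (forall c, a <= c <= b -> is_derive f c (df c)) ->
  exists c, a < c < b /\ f b - f a = df c * (b - a).
Proof.
intros hab hd. destruct (MVT_cor2 f df a b hab) as [c [e hc]].
- intros c hc. apply is_derive_Reals, hd, hc.
- exists c. split; assumption.
Qed.

Lemma le_of_derive_ge0 (f df : R -> R) a b : a <= b ->
  (forall c, a <= c <= b -> is_derive f c (df c)) ->
  (forall c, a < c < b -> 0 <= df c) -> f a <= f b.
Proof.
intros hab hd hpos. destruct (Req_dec a b) as [<-|hne]; [lra|].
destruct (MVT_is_derive f df a b) as [c [hc e]]; [lra|exact hd|].
specialize (hpos c hc). nra.
Qed.

Lemma le_of_derive_le0 (f df : R -> R) a b : a <= b ->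
  (forall c, a <= c <= b -> is_derive f c (df c)) ->
  (forall c, a < c < b -> df c <= 0) -> f b <= f a.
Proof.
intros hab hd hneg. destruct (Req_dec a b) as [<-|hne]; [lra|].
destruct (MVT_is_derive f df a b) as [c [hc e]]; [lra|exact hd|].
specialize (hneg c hc). nra.
Qed.

Lemma lt_of_derive_gt0 (f df : R -> R) a b : a < b ->
  (forall c, a <= c <= b -> is_derive f c (df c)) ->
  (forall c, a < c < b -> 0 < df c) -> f a < f b.
Proof.
intros hab hd hpos.
destruct (MVT_is_derive f df a b) as [c [hc e]]; [lra|exact hd|].
specialize (hpos c hc). nra.
Qed.

Lemma Rmin_le_of_derive_sign_change (f df : R -> R) a b x : a <= x <= b ->
  (forall c, a <= c <= b -> is_derive f c (df c)) ->
  (forall y z, a < y < z -> z < b -> df y < 0 -> df z <= 0) ->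
  Rmin (f a) (f b) <= f x.
Proof.
intros hx hd hsign.
destruct (classic (exists y, a < y < x /\ df y < 0)) as [[y [hy hneg]]|hnone].
- apply Rle_trans with (f b); [apply Rmin_r|].
  apply (le_of_derive_le0 f df); [lra|intros; apply hd; lra|].
  intros z hz. apply (hsign y z); lra.
- apply Rle_trans with (f a); [apply Rmin_l|].
  apply (le_of_derive_ge0 f df); [lra|intros; apply hd; lra|].
  intros z hz. destruct (Rle_lt_dec 0 (df z)) as [h|h]; [exact h|].
  exfalso. apply hnone. exists z. split; [lra|exact h].
Qed.

Lemma m_fun_inv lam t : 0 < lam < 1 -> 0 < t ->
  m_fun (1 - lam) (/ t) = m_fun lam t / t.
Proof.
intros hl ht. unfold m_fun.
assert (hmix : 0 < lam * t + 1 - lam) by nra.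
replace ((1 - lam) * / t + 1 - (1 - lam)) with ((lam * t + 1 - lam) / t)
  by (field; lra).
rewrite ln_div, ln_Rinv by lra. field. lra.
Qed.

Lemma hel_inv t : 0 < t -> hel (/ t) = hel t / t.
Proof.
intros ht. unfold hel. rewrite sqrt_inv.
assert (hq : 0 < sqrt t) by (apply sqrt_lt_R0; lra).
rewrite <- (sqrt_sqrt t) at 3 by lra. field. lra.
Qed.

Lemma hel_pos t : 0 < t -> t <> 1 -> 0 < hel t.
Proof.
intros ht ht1. unfold hel.
assert (hq : sqrt t <> 1).
{ rewrite <- sqrt_1. intro e. apply ht1, sqrt_inj; lra. }
destruct (Rtotal_order (sqrt t) 1) as [h|[h|h]]; [nra|contradiction|nra].
Qed.

Lemma kappa_inv lam t : 0 < lam < 1 -> 0 < t -> t <> 1 ->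
  kappa lam t = kappa (1 - lam) (/ t).
Proof.
intros hl ht ht1. unfold kappa. rewrite m_fun_inv, hel_inv by lra.
pose proof (hel_pos t ht ht1). field. lra.
Qed.

Lemma Lb_1m lam : Lb (1 - lam) = Lb lam.
Proof. unfold Lb. replace (1 - (1 - lam)) with lam by ring. apply f_equal, Rmin_comm. Qed.

Lemma Ub_1m lam : 0 < lam < 1 -> Ub (1 - lam) = Ub lam.
Proof.
intros hl. unfold Ub.
destruct (Req_EM_T (1 - lam) (/ 2)), (Req_EM_T lam (/ 2)); try lra.
replace ((1 - (1 - lam)) / (1 - lam)) with (/ ((1 - lam) / lam)) by (field; lra).
rewrite ln_Rinv by (apply Rdiv_lt_0_compat; lra).
field. lra.
Qed.

Lemma ln_lt0 x : 0 < x < 1 -> ln x < 0.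
Proof. intros hx. rewrite <- ln_1. apply ln_increasing; lra. Qed.

Lemma eta_ge0 l : 0 < l < 1 -> 0 <= eta l.
Proof. intros hl. unfold eta. pose proof (ln_lt0 l hl). nra. Qed.

Lemma eta_le_1m l : 0 < l -> eta l <= 1 - l.
Proof.
intros hl. unfold eta.
pose proof (exp_ineq1_le (- ln l)) as h. rewrite exp_Ropp, exp_ln in h by lra.
assert (e : l * / l = 1) by (field; lra). nra.
Qed.

Lemma Lb_ge0 l : 0 < l < 1 -> 0 <= Lb l.
Proof.
intros hl. unfold Lb. apply Rmult_le_pos; [lra|].
apply Rmin_glb; apply eta_ge0; lra.
Qed.

Lemma Lb_le_eta l : Lb l <= 2 * eta l.
Proof. unfold Lb. pose proof (Rmin_l (eta l) (eta (1 - l))). lra. Qed.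

Lemma Lb_le_var l : 0 < l < 1 -> Lb l <= 4 * l * (1 - l).
Proof.
intros hl. unfold Lb.
pose proof (eta_le_1m l ltac:(lra)). pose proof (eta_le_1m (1 - l) ltac:(lra)).
pose proof (Rmin_l (eta l) (eta (1 - l))). pose proof (Rmin_r (eta l) (eta (1 - l))).
destruct (Rle_lt_dec l (/ 2)); nra.
Qed.

Lemma ln_le_2_ratio r : 0 < r <= 1 -> ln r <= 2 * (r - 1) / (r + 1).
Proof.
intros hr.
assert (h : ln r - 2 * (r - 1) / (r + 1) <= ln 1 - 2 * (1 - 1) / (1 + 1)).
{ apply (le_of_derive_ge0 (fun r => ln r - 2 * (r - 1) / (r + 1))
                          (fun r => (r - 1) ^ 2 / (r * (r + 1) ^ 2))); [lra| |].
  - intros c hc. auto_derive; [lra|]. field. lra.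
  - intros c hc. apply Rdiv_le_0_compat; [nra|]. apply Rmult_lt_0_compat; nra. }
rewrite ln_1 in h. lra.
Qed.

Lemma Ub_ge_var l : / 2 <= l < 1 -> 4 * l * (1 - l) <= Ub l.
Proof.
intros hl. unfold Ub. destruct (Req_EM_T l (/ 2)) as [->|hne]; [lra|].
set (r := (1 - l) / l).
assert (hr : 0 < r <= 1).
{ unfold r. split; [apply Rdiv_lt_0_compat; lra|].
  apply (Rmult_le_reg_r l); [lra|]. field_simplify; lra. }
assert (hlnr : ln r <= 2 * (1 - 2 * l)).
{ replace (2 * (1 - 2 * l)) with (2 * (r - 1) / (r + 1)) by (unfold r; field; lra).
  apply ln_le_2_ratio, hr. }
replace (2 * l * (1 - l) / (1 - 2 * l) * ln r)
  with (2 * l * (1 - l) * (ln r * / (1 - 2 * l))) by (field; lra).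
assert (hq : 2 <= ln r * / (1 - 2 * l)).
{ assert (hinv : / (1 - 2 * l) < 0) by (apply Rinv_lt_0_compat; lra).
  assert (e : (1 - 2 * l) * / (1 - 2 * l) = 1) by (field; lra). nra. }
assert (0 < l * (1 - l)) by nra. nra.
Qed.

Definition mix l x := l * x ^ 2 + 1 - l.

Definition m2 l x := l * x ^ 2 * (2 * ln x) - mix l x * ln (mix l x).
Definition dm2 l x := 2 * l * x * (2 * ln x - ln (mix l x)).
Definition d2m2 l x :=
  2 * l * (2 * ln x - ln (mix l x)) + 4 * l - 4 * l ^ 2 * x ^ 2 / mix l x.
Definition d3m2 l x := 4 * l * (1 - l) * (1 - l - l * x ^ 2) / (x * mix l x ^ 2).

Definition kappa2 l x := 2 * m2 l x / (x - 1) ^ 2.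
Definition kappa2_num l x := dm2 l x * (x - 1) - 2 * m2 l x.
Definition dkappa2_num l x :=
  2 * l * (2 * (1 - l) * (x - 1) / mix l x - (2 * ln x - ln (mix l x))).
Definition d2kappa2_num l x :=
  4 * l * (1 - l) * (x - 1) * (1 - l - l * x ^ 2) / (x * mix l x ^ 2).

Lemma mix_pos l x : 0 < l < 1 -> 0 < mix l x.
Proof. intros hl. unfold mix. nra. Qed.

Lemma mix_1 l : mix l 1 = 1.
Proof. unfold mix. ring. Qed.

Lemma m2_1 l : m2 l 1 = 0.
Proof. unfold m2. rewrite mix_1, ln_1. ring. Qed.

Lemma dm2_1 l : dm2 l 1 = 0.
Proof. unfold dm2. rewrite mix_1, ln_1. ring. Qed.

(* [auto_derive] expands [x ^ 2] to [x * (x * 1)] inside [ln]; the [replace] restores the atom. *)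
Ltac derive_mix l x :=
  unfold mix in *; auto_derive; [repeat split; lra|];
  try replace (l * (x * (x * 1)) + 1 + - l) with (l * x ^ 2 + 1 - l) by ring;
  field; lra.

Section Derivatives.
Variables l x : R.
Hypotheses (hl : 0 < l < 1) (hx : 0 < x).

Lemma is_derive_dm2 : is_derive (dm2 l) x (d2m2 l x).
Proof. pose proof (mix_pos l x hl). unfold dm2, d2m2. derive_mix l x. Qed.

Lemma is_derive_d2m2 : is_derive (d2m2 l) x (d3m2 l x).
Proof. pose proof (mix_pos l x hl). unfold d2m2, d3m2. derive_mix l x. Qed.

Lemma is_derive_kappa2_num : is_derive (kappa2_num l) x (dkappa2_num l x).
Proof.
pose proof (mix_pos l x hl). unfold kappa2_num, dkappa2_num, m2, dm2. derive_mix l x.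
Qed.

Lemma is_derive_dkappa2_num : is_derive (dkappa2_num l) x (d2kappa2_num l x).
Proof. pose proof (mix_pos l x hl). unfold dkappa2_num, d2kappa2_num. derive_mix l x. Qed.

Lemma is_derive_kappa2 : x <> 1 ->
  is_derive (kappa2 l) x (2 * kappa2_num l x / (x - 1) ^ 3).
Proof.
intros hx1. assert (hx1' : x - 1 <> 0) by lra. pose proof (mix_pos l x hl).
unfold kappa2, kappa2_num, m2, dm2, mix in *. auto_derive.
- repeat split; try lra. intro e. apply hx1'. nra.
- replace (l * (x * (x * 1)) + 1 + - l) with (l * x ^ 2 + 1 - l) by ring. field. lra.
Qed.

Lemma is_derive_m2_sub_sq c :
  is_derive (fun y => 2 * m2 l y - c * (y - 1) ^ 2) x (2 * (dm2 l x - c * (x - 1))).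
Proof. pose proof (mix_pos l x hl). unfold m2, dm2. derive_mix l x. Qed.

End Derivatives.

Definition low_gap l c u := - 2 * l * ln (mix (1 - l) u) - c * (1 - u).
Definition low_gap_num l c u := c * mix (1 - l) u - 4 * l * (1 - l) * u.

Lemma is_derive_low_gap l c u : 0 < l < 1 ->
  is_derive (low_gap l c) u (low_gap_num l c u / mix (1 - l) u).
Proof.
intros hl. pose proof (mix_pos (1 - l) u ltac:(lra)).
unfold low_gap, low_gap_num. derive_mix (1 - l) u.
Qed.

Lemma dm2_sub_low_gap l c x : 0 < l < 1 -> 0 < x ->
  dm2 l x - c * (x - 1) = x * low_gap l c (/ x).
Proof.
intros hl hx. pose proof (mix_pos l x hl).
unfold dm2, low_gap.
replace (mix (1 - l) (/ x)) with (mix l x / x ^ 2) by (unfold mix; field; lra).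
rewrite ln_div, ln_pow by (try apply pow_lt; lra). simpl INR. field. lra.
Qed.

Section LowerBound.
Variables l c : R.
Hypotheses (hl : 0 < l < 1) (hc0 : 0 <= c)
  (hc_var : c <= 4 * l * (1 - l)) (hc_eta : c <= 2 * eta l).

Lemma low_gap_num_sign_change y z : y < z < 1 ->
  low_gap_num l c y < 0 -> low_gap_num l c z <= 0.
Proof.
intros hyz hy.
assert (hconv : (1 - z) * low_gap_num l c y + (z - y) * low_gap_num l c 1
                - (1 - y) * low_gap_num l c z = c * (1 - l) * (z - y) * (1 - z) * (1 - y))
  by (unfold low_gap_num, mix; ring).
assert (0 <= c * (1 - l) * (z - y) * (1 - z) * (1 - y)).
{ repeat apply Rmult_le_pos; lra. }
assert (low_gap_num l c 1 <= 0) by (unfold low_gap_num, mix; lra).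
nra.
Qed.

Lemma low_gap_ge0 u : 0 <= u <= 1 -> 0 <= low_gap l c u.
Proof.
intros hu.
assert (h0 : low_gap l c 0 = 2 * eta l - c).
{ unfold low_gap, mix, eta. replace ((1 - l) * 0 ^ 2 + 1 - (1 - l)) with l by ring. ring. }
assert (h1 : low_gap l c 1 = 0) by (unfold low_gap; rewrite mix_1, ln_1; ring).
apply Rle_trans with (Rmin (low_gap l c 0) (low_gap l c 1)).
- apply Rmin_glb; lra.
- apply (Rmin_le_of_derive_sign_change _ (fun u => low_gap_num l c u / mix (1 - l) u)).
  + exact hu.
  + intros; apply is_derive_low_gap, hl.
  + intros y z hy hz hneg.
    pose proof (mix_pos (1 - l) y ltac:(lra)) as hmixy.
    pose proof (mix_pos (1 - l) z ltac:(lra)) as hmixz.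
    assert (hny : low_gap_num l c y < 0).
    { destruct (Rlt_le_dec (low_gap_num l c y) 0) as [h|h]; [exact h|].
      pose proof (Rdiv_le_0_compat _ _ h hmixy). lra. }
    pose proof (low_gap_num_sign_change y z ltac:(lra) hny).
    unfold Rdiv. pose proof (Rinv_0_lt_compat _ hmixz). nra.
Qed.

Lemma m2_lower_bound x : 1 <= x -> c * (x - 1) ^ 2 <= 2 * m2 l x.
Proof.
intros hx.
assert (h : 2 * m2 l 1 - c * (1 - 1) ^ 2 <= 2 * m2 l x - c * (x - 1) ^ 2).
{ apply (le_of_derive_ge0 (fun y => 2 * m2 l y - c * (y - 1) ^ 2)
                          (fun y => 2 * (dm2 l y - c * (y - 1)))); [exact hx| |].
  - intros y hy. apply is_derive_m2_sub_sq; lra.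
  - intros y hy. rewrite dm2_sub_low_gap by lra.
    assert (0 <= low_gap l c (/ y)).
    { apply low_gap_ge0. split; [left; apply Rinv_0_lt_compat; lra|].
      rewrite <- Rinv_1. apply Rinv_le_contravar; lra. }
    nra. }
rewrite m2_1 in h. lra.
Qed.

End LowerBound.

Section UpperBoundAboveHalf.
Variables l c : R.
Hypotheses (hl : / 2 <= l < 1) (hc : 4 * l * (1 - l) <= c).

Lemma d2m2_le x : 1 <= x -> d2m2 l x <= 4 * l * (1 - l).
Proof.
intros hx.
replace (4 * l * (1 - l)) with (d2m2 l 1) by (unfold d2m2; rewrite mix_1, ln_1; field).
apply (le_of_derive_le0 (d2m2 l) (d3m2 l)); [exact hx| |].
- intros y hy. apply is_derive_d2m2; lra.
- intros y hy. pose proof (mix_pos l y ltac:(lra)).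
  assert (hden : 0 < y * mix l y ^ 2) by (apply Rmult_lt_0_compat; [lra|apply pow_lt; lra]).
  assert (hnum : 4 * l * (1 - l) * (1 - l - l * y ^ 2) <= 0).
  { assert (0 <= 4 * l * (1 - l)) by nra. assert (1 - l - l * y ^ 2 <= 0) by nra. nra. }
  unfold d3m2, Rdiv. pose proof (Rinv_0_lt_compat _ hden). nra.
Qed.

Lemma dm2_le x : 1 <= x -> dm2 l x <= c * (x - 1).
Proof.
intros hx.
assert (h : dm2 l x - c * (x - 1) <= dm2 l 1 - c * (1 - 1)).
{ apply (le_of_derive_le0 (fun y => dm2 l y - c * (y - 1)) (fun y => d2m2 l y - c));
    [exact hx| |].
  - intros y hy. apply (is_derive_minus (dm2 l) (fun y => c * (y - 1))).
    + apply is_derive_dm2; lra.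
    + auto_derive; [trivial|ring].
  - intros y hy. pose proof (d2m2_le y ltac:(lra)). lra. }
rewrite dm2_1 in h. lra.
Qed.

Lemma m2_upper_bound x : 1 <= x -> 2 * m2 l x <= c * (x - 1) ^ 2.
Proof.
intros hx.
assert (h : 2 * m2 l x - c * (x - 1) ^ 2 <= 2 * m2 l 1 - c * (1 - 1) ^ 2).
{ apply (le_of_derive_le0 (fun y => 2 * m2 l y - c * (y - 1) ^ 2)
                          (fun y => 2 * (dm2 l y - c * (y - 1)))); [exact hx| |].
  - intros y hy. apply is_derive_m2_sub_sq; lra.
  - intros y hy. pose proof (dm2_le y ltac:(lra)). lra. }
rewrite m2_1 in h. lra.
Qed.

End UpperBoundAboveHalf.

Definition odds l := (1 - l) / l.

Lemma mix_odds l : 0 < l -> mix l (odds l) = odds l.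
Proof. intros hl. unfold mix, odds. field. lra. Qed.

Lemma kappa2_num_1 l : kappa2_num l 1 = 0.
Proof. unfold kappa2_num. rewrite dm2_1, m2_1. ring. Qed.

Lemma kappa2_num_odds l : 0 < l -> kappa2_num l (odds l) = 0.
Proof.
intros hl. unfold kappa2_num, dm2, m2. rewrite mix_odds by exact hl. unfold odds. field. lra.
Qed.

Lemma dkappa2_num_1 l : dkappa2_num l 1 = 0.
Proof. unfold dkappa2_num. rewrite mix_1, ln_1. field. Qed.

Lemma kappa2_odds l : 0 < l < / 2 ->
  kappa2 l (odds l) = 2 * l * (1 - l) / (1 - 2 * l) * ln (odds l).
Proof. intros hl. unfold kappa2, m2. rewrite mix_odds by lra. unfold odds. field. lra. Qed.

Section UpperBoundBelowHalf.
Variable l : R.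
Hypothesis hl : 0 < l < / 2.

Lemma sqrt_odds_bounds : 1 < sqrt (odds l) < odds l.
Proof.
assert (hr : 1 < odds l).
{ unfold odds. apply (Rmult_lt_reg_r l); [lra|]. field_simplify; lra. }
pose proof (sqrt_sqrt (odds l) ltac:(lra)).
assert (1 < sqrt (odds l)) by (rewrite <- sqrt_1; apply sqrt_lt_1; lra).
split; nra.
Qed.

Lemma d2kappa2_num_ge0 y : 1 <= y <= sqrt (odds l) -> 0 <= d2kappa2_num l y.
Proof.
intros hy. pose proof sqrt_odds_bounds. pose proof (mix_pos l y ltac:(lra)).
pose proof (sqrt_sqrt (odds l) ltac:(lra)).
assert (hlr : l * odds l = 1 - l) by (unfold odds; field; lra).
assert (0 <= 1 - l - l * y ^ 2) by nra.
unfold d2kappa2_num. apply Rdiv_le_0_compat.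
- repeat apply Rmult_le_pos; lra.
- apply Rmult_lt_0_compat; [lra|apply pow_lt; lra].
Qed.

Lemma d2kappa2_num_le0 y : sqrt (odds l) <= y -> d2kappa2_num l y <= 0.
Proof.
intros hy. pose proof sqrt_odds_bounds. pose proof (mix_pos l y ltac:(lra)).
pose proof (sqrt_sqrt (odds l) ltac:(lra)).
assert (hlr : l * odds l = 1 - l) by (unfold odds; field; lra).
assert (1 - l - l * y ^ 2 <= 0) by nra.
assert (hnum : 4 * l * (1 - l) * (y - 1) * (1 - l - l * y ^ 2) <= 0).
{ assert (0 <= 4 * l * (1 - l) * (y - 1)) by (repeat apply Rmult_le_pos; lra). nra. }
assert (hden : 0 < y * mix l y ^ 2) by (apply Rmult_lt_0_compat; [lra|apply pow_lt; lra]).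
unfold d2kappa2_num, Rdiv. pose proof (Rinv_0_lt_compat _ hden). nra.
Qed.

Lemma dkappa2_num_ge0 y : 1 <= y <= sqrt (odds l) -> 0 <= dkappa2_num l y.
Proof.
intros hy. rewrite <- (dkappa2_num_1 l).
apply (le_of_derive_ge0 (dkappa2_num l) (d2kappa2_num l)); [lra| |].
- intros z hz. apply is_derive_dkappa2_num; lra.
- intros z hz. apply d2kappa2_num_ge0. lra.
Qed.

Lemma dkappa2_num_antitone y z : sqrt (odds l) <= y <= z ->
  dkappa2_num l z <= dkappa2_num l y.
Proof.
intros hyz. pose proof sqrt_odds_bounds.
apply (le_of_derive_le0 (dkappa2_num l) (d2kappa2_num l)); [lra| |].
- intros w hw. apply is_derive_dkappa2_num; lra.
- intros w hw. apply d2kappa2_num_le0. lra.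
Qed.

Lemma kappa2_num_ge0 x : 1 <= x <= odds l -> 0 <= kappa2_num l x.
Proof.
intros hx. pose proof sqrt_odds_bounds.
apply Rle_trans with (Rmin (kappa2_num l 1) (kappa2_num l (odds l))).
- rewrite kappa2_num_1, kappa2_num_odds by lra. rewrite Rmin_left; lra.
- apply (Rmin_le_of_derive_sign_change _ (dkappa2_num l)); [exact hx| |].
  + intros y hy. apply is_derive_kappa2_num; lra.
  + intros y z hy hz hneg.
    assert (sqrt (odds l) < y).
    { destruct (Rlt_le_dec (sqrt (odds l)) y) as [h|h]; [exact h|].
      pose proof (dkappa2_num_ge0 y ltac:(lra)). lra. }
    pose proof (dkappa2_num_antitone y z ltac:(lra)). lra.
Qed.

Lemma kappa2_num_le0 x : odds l <= x -> kappa2_num l x <= 0.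
Proof.
intros hx. pose proof sqrt_odds_bounds.
rewrite <- (kappa2_num_odds l) by lra.
apply (le_of_derive_le0 (kappa2_num l) (dkappa2_num l)); [exact hx| |].
- intros y hy. apply is_derive_kappa2_num; lra.
- intros z hz. destruct (Rle_lt_dec (dkappa2_num l z) 0) as [h|h]; [exact h|exfalso].
  (* [dkappa2_num] would then be positive on [[sqrt (odds l), odds l]], so [kappa2_num]
     would climb strictly from a nonnegative value to its zero at [odds l]. *)
  assert (hlt : kappa2_num l (sqrt (odds l)) < kappa2_num l (odds l)).
  { apply (lt_of_derive_gt0 (kappa2_num l) (dkappa2_num l)); [lra| |].
    - intros y hy. apply is_derive_kappa2_num; lra.
    - intros y hy. pose proof (dkappa2_num_antitone y z ltac:(lra)). lra. }
  pose proof (kappa2_num_ge0 (sqrt (odds l)) ltac:(lra)).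
  rewrite kappa2_num_odds in hlt by lra. lra.
Qed.

Lemma kappa2_le_odds x : 1 < x -> kappa2 l x <= kappa2 l (odds l).
Proof.
intros hx. pose proof sqrt_odds_bounds.
destruct (Rle_lt_dec x (odds l)) as [hxr|hxr].
- apply (le_of_derive_ge0 (kappa2 l) (fun y => 2 * kappa2_num l y / (y - 1) ^ 3));
    [exact hxr| |].
  + intros y hy. apply is_derive_kappa2; lra.
  + intros y hy. apply Rdiv_le_0_compat; [|apply pow_lt; lra].
    pose proof (kappa2_num_ge0 y ltac:(lra)). lra.
- apply (le_of_derive_le0 (kappa2 l) (fun y => 2 * kappa2_num l y / (y - 1) ^ 3));
    [lra| |].
  + intros y hy. apply is_derive_kappa2; lra.
  + intros y hy. pose proof (kappa2_num_le0 y ltac:(lra)).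
    assert (hp : 0 < / (y - 1) ^ 3) by (apply Rinv_0_lt_compat, pow_lt; lra).
    unfold Rdiv. nra.
Qed.

End UpperBoundBelowHalf.

Lemma kappa_sq l x : 0 < x -> x <> 1 -> kappa l (x ^ 2) = kappa2 l x.
Proof.
intros hx hx1. assert (x - 1 <> 0) by lra.
unfold kappa, kappa2, m_fun, hel, m2, mix.
rewrite sqrt_pow2, ln_pow by lra. simpl INR. field. lra.
Qed.

Lemma kappa_bounds_gt1 l t : 0 < l < 1 -> 1 < t -> Lb l <= kappa l t <= Ub l.
Proof.
intros hl ht. set (x := sqrt t).
assert (hx : 1 < x) by (unfold x; rewrite <- sqrt_1; apply sqrt_lt_1; lra).
replace t with (x ^ 2) by (unfold x; rewrite pow2_sqrt; lra).
rewrite kappa_sq by lra.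
assert (hsq : 0 < (x - 1) ^ 2) by (apply pow_lt; lra).
assert (ekappa2 : 2 * m2 l x = kappa2 l x * (x - 1) ^ 2) by (unfold kappa2; field; lra).
split.
- pose proof (m2_lower_bound l (Lb l) hl (Lb_ge0 l hl) (Lb_le_var l hl) (Lb_le_eta l) x).
  apply (Rmult_le_reg_r ((x - 1) ^ 2)); [exact hsq|]. lra.
- destruct (Rlt_le_dec l (/ 2)) as [hl2|hl2].
  + pose proof (kappa2_le_odds l ltac:(lra) x hx) as hmax.
    rewrite kappa2_odds in hmax by lra.
    unfold Ub. destruct (Req_EM_T l (/ 2)); [lra|exact hmax].
  + pose proof (m2_upper_bound l (Ub l) ltac:(lra) (Ub_ge_var l ltac:(lra)) x).
    apply (Rmult_le_reg_r ((x - 1) ^ 2)); [exact hsq|]. lra.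
Qed.

Theorem lemma2 (lam t : R) :
  0 < lam < 1 -> 0 < t -> t <> 1 ->
  kappa lam t = kappa (1 - lam) (/ t) /\
  Lb lam <= kappa lam t <= Ub lam.
Proof.
intros hl ht ht1. split; [apply kappa_inv; assumption|].
destruct (Rtotal_order t 1) as [hlt|[heq|hgt]]; [|contradiction|].
- rewrite kappa_inv, <- Lb_1m, <- (Ub_1m lam hl) by assumption.
  apply kappa_bounds_gt1; [lra|].
  rewrite <- Rinv_1. apply Rinv_lt_contravar; lra.
- apply kappa_bounds_gt1; assumption.
Qed.
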